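(* If $\mathbf{h}$ has a fixed point, the modified Jacobi-type iteration corresponding to $\mathbf{x}^{n+1} = \mathbf{h}(\mathbf{x}^n)$ converges in at most $m/b^2$ iterations from any initial guess $\mathbf{x}^0$. ($m$ is the number of nonzero entries in all blocks in the sparsity pattern $S_B$ and $b$ is the block size.)
   Context: Let $\mathbf{A}\in\mathbb{R}^{n\times n}$ be partitioned into square $b\times b$ blocks, and $S_B$ a set of block indices containing all diagonal blocks. The unknowns (entries of the block ILU factors $\mathbf{L}_{ij}$, $i>j$, and $\mathbf{U}_{ij}$, $i\le j$, for $(i,j)\in S_B$) form $\mathbf{x}\in\mathbb{R}^m$, $m=|S_B|b^2$, with $\mathbf{X}_{ij}$ the $b\times b$ block for index $(i,j)$. The map $\mathbf{h}:D_B\to\mathbb{R}^m$ is given blockwise by $\mathbf{H}_{ij}(\mathbf{x})=(\mathbf{A}_{ij}-\sum_{k=1}^{j-1}\mathbf{X}_{ik}\mathbf{X}_{kj})\mathbf{X}_{jj}^{-1}$ for $i>j$ and $\mathbf{H}_{ij}(\mathbf{x})=\mathbf{A}_{ij}-\sum_{k=1}^{i-1}\mathbf{X}_{ik}\mathbf{X}_{kj}$ for $i\le j$, on $D_B:=\{\mathbf{x}: \mathbf{X}_{jj}\text{ nonsingular for all diagonal blocks}\}$. The modified Jacobi-type iteration is the synchronous iteration $\mathbf{x}^{n+1}=\mathbf{h}(\mathbf{x}^n)$ except that whenever a diagonal block $\mathbf{X}_{jj}$ becomes singular, it is replaced by an arbitrary nonsingular matrix. *)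

From HB Require Import structures.
From mathcomp Require Import all_boot all_order all_algebra.
Set Implicit Arguments. Unset Strict Implicit. Unset Printing Implicit Defensive.
Import Order.TTheory GRing.Theory Num.Theory.
Local Open Scope ring_scope.

(* The block X_ij of the unknown vector, zero outside the pattern S_B
   (blocks outside the pattern are not unknowns and do not contribute). *)
Definition Xblk (R : fieldType) (nb b : nat) (S : {set 'I_nb * 'I_nb})
    (x : 'I_nb -> 'I_nb -> 'M[R]_b) (i j : 'I_nb) : 'M[R]_b :=
  if (i, j) \in S then x i j else 0.

Definition Hblk (R : fieldType) (nb b : nat) (A : 'I_nb -> 'I_nb -> 'M[R]_b)
    (S : {set 'I_nb * 'I_nb}) (x : 'I_nb -> 'I_nb -> 'M[R]_b) (i j : 'I_nb)
    : 'M[R]_b :=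
  let s := \sum_(k < nb | (k < minn i j)%N) (Xblk S x i k *m Xblk S x k j) in
  if (j < i)%N then (A i j - s) *m invmx (x j j) else A i j - s.

Definition in_DB (R : fieldType) (nb b : nat) (x : 'I_nb -> 'I_nb -> 'M[R]_b) :=
  forall j : 'I_nb, x j j \in unitmx.

Definition is_fixed_point (R : fieldType) (nb b : nat)
    (A : 'I_nb -> 'I_nb -> 'M[R]_b) (S : {set 'I_nb * 'I_nb})
    (x : 'I_nb -> 'I_nb -> 'M[R]_b) :=
  in_DB x /\ forall i j, (i, j) \in S -> x i j = Hblk A S x i j.

(* xs is a run of the modified Jacobi-type iteration x^{n+1} = h(x^n):
   every iterate lies in D_B (a singular diagonal block is replaced by an
   arbitrary nonsingular one), off-diagonal pattern blocks are updated by h,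
   and a diagonal block is updated by h whenever the new value is nonsingular. *)
Definition modified_jacobi (R : fieldType) (nb b : nat)
    (A : 'I_nb -> 'I_nb -> 'M[R]_b) (S : {set 'I_nb * 'I_nb})
    (xs : nat -> 'I_nb -> 'I_nb -> 'M[R]_b) :=
  forall n : nat,
    in_DB (xs n) /\
    (forall i j, (i, j) \in S -> i != j -> xs n.+1 i j = Hblk A S (xs n) i j) /\
    (forall j, Hblk A S (xs n) j j \in unitmx -> xs n.+1 j j = Hblk A S (xs n) j j).

From mathcomp Require Import all_boot all_order all_algebra.
From mathcomp Require Import zify.
Set Implicit Arguments. Unset Strict Implicit. Unset Printing Implicit Defensive.
Local Open Scope ring_scope.

(* Order the blocks by [block_level]: by min(i, j), then U before L.  The
   update of block (i, j) reads only pattern blocks of strictly lower level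
   (X_ik and X_kj for k < min(i, j), and X_jj when i > j).  Hence, by
   induction on the iteration count, a pattern block p is exact from
   iteration [blocks_up_to_level p] on, and this count is at most
   |S_B| = m / b^2.  A diagonal block is then updated to the nonsingular
   X*_jj, so it is never replaced. *)

Definition block_level (nb : nat) (p : 'I_nb * 'I_nb) : nat :=
  (2 * minn p.1 p.2 + (p.2 < p.1))%N.

Section ModifiedJacobi.

Variables (R : fieldType) (nb b : nat).
Variables (A : 'I_nb -> 'I_nb -> 'M[R]_b) (S : {set 'I_nb * 'I_nb}).
Hypothesis diag_in_pattern : forall j : 'I_nb, (j, j) \in S.

Lemma Hblk_lower_levels (x y : 'I_nb -> 'I_nb -> 'M[R]_b) (i j : 'I_nb) :
  (forall q, q \in S -> (block_level q < block_level (i, j))%N ->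
     x q.1 q.2 = y q.1 q.2) ->
  Hblk A S x i j = Hblk A S y i j.
Proof.
move=> xy; rewrite /Hblk /block_level /= in xy *.
have Xblk_eq p : (block_level p < block_level (i, j))%N ->
    Xblk S x p.1 p.2 = Xblk S y p.1 p.2.
  by rewrite /Xblk; case: ifP => // /xy; apply.
rewrite (eq_bigr (fun k => Xblk S y i k *m Xblk S y k j)); last first.
  move=> k k_lt; rewrite (Xblk_eq (i, k)) ?(Xblk_eq (k, j)) //= /block_level /=.
    by case: (j < k)%N; case: (j < i)%N; lia.
  by case: (k < i)%N; case: (j < i)%N; lia.
case: ifP => // ji; rewrite (xy (j, j)) //= ltnn ji; lia.
Qed.

Definition blocks_up_to_level (p : 'I_nb * 'I_nb) : nat :=
  #|[set q in S | (block_level q <= block_level p)%N]|.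

Lemma blocks_up_to_level_gt0 p : p \in S -> (0 < blocks_up_to_level p)%N.
Proof. by move=> pS; apply/card_gt0P; exists p; rewrite inE pS /=. Qed.

Lemma blocks_up_to_level_lt p q : p \in S ->
  (block_level q < block_level p)%N -> (blocks_up_to_level q < blocks_up_to_level p)%N.
Proof.
move=> pS qp; apply: proper_card; apply/properP; split.
  by apply/subsetP => r; rewrite !inE => /andP[-> /leq_trans]; apply; apply: ltnW.
by exists p; rewrite !inE pS //= leqNgt qp.
Qed.

Lemma blocks_up_to_level_le_card p : (blocks_up_to_level p <= #|S|)%N.
Proof. by apply: subset_leq_card; apply/subsetP => q; rewrite inE => /andP[]. Qed.

Lemma modified_jacobi_exact_blocks xs xstar :
  is_fixed_point A S xstar -> modified_jacobi A S xs ->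
  forall m p, p \in S -> (blocks_up_to_level p <= m)%N -> xs m p.1 p.2 = xstar p.1 p.2.
Proof.
move=> [xstar_DB xstar_fix] MJ; elim=> [|m IHm] [i j] /= pS.
  by rewrite leqNgt (blocks_up_to_level_gt0 pS).
move=> pm; have [_ [update_off update_diag]] := MJ m.
have H_exact : Hblk A S (xs m) i j = xstar i j.
  rewrite xstar_fix //; apply: Hblk_lower_levels => q qS qp.
  by apply: IHm => //; rewrite -ltnS (leq_trans (blocks_up_to_level_lt pS qp)).
have [ji|ij] := eqVneq i j; last by rewrite update_off.
by rewrite -ji in H_exact *; rewrite update_diag H_exact ?xstar_DB.
Qed.

End ModifiedJacobi.

Theorem theorem8 (R : realFieldType) (nb b : nat)
    (A : 'I_nb -> 'I_nb -> 'M[R]_b.+1) (S : {set 'I_nb * 'I_nb})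
    (xs : nat -> 'I_nb -> 'I_nb -> 'M[R]_b.+1) :
  (forall j : 'I_nb, (j, j) \in S) ->
  forall xstar, is_fixed_point A S xstar ->
  modified_jacobi A S xs ->
    forall n : nat, (#|S| * b.+1 ^ 2 %/ b.+1 ^ 2 <= n)%N ->
      forall i j, (i, j) \in S -> xs n i j = xstar i j.
Proof.
move=> diagS xstar xstar_fix MJ n; rewrite mulnK ?expn_gt0 // => Sn i j ijS.
apply: (modified_jacobi_exact_blocks diagS xstar_fix MJ ijS).
exact: leq_trans (blocks_up_to_level_le_card _ _) Sn.
Qed.
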